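(* For every $M\in\mathrm{Mat}_3(\mathbb C)$, the matrix $$L(M)=\sum_{i=1}^d I_3^{\otimes (i-1)}\otimes M\otimes I_3^{\otimes(d-i)}$$ lies in $\mathcal T$ (under the identification $\mathrm{Mat}_X(\mathbb C)=\mathrm{Mat}_3(\mathbb C)^{\otimes d}$ below).
   Context: Let $d\ge1$, $\mathbb F_3=\{0,1,2\}$ and $X=\mathbb F_3^d$. The Hamming digraph $H^*(d,3)$ has vertex set $X$, with an arc from $y$ to $z$ iff $y$ and $z$ differ in exactly one coordinate $i$ and $z_i=y_i+1$ in $\mathbb F_3$. Let $V=\mathbb C^X$ with basis $\{\hat y\}$. The adjacency matrix $A\in\mathrm{Mat}_X(\mathbb C)$ has $(y,z)$-entry $1$ iff there is an arc from $y$ to $z$. For integers $s,t$, $E^*_{[s,t]}$ is the diagonal matrix whose $(y,y)$-entry is $1$ if $y$ has exactly $s$ ones and $t$ twos, and $0$ otherwise. The Terwilliger algebra $\mathcal T$ is the subalgebra of $\mathrm{Mat}_X(\mathbb C)$ generated by $A$, $A^\top$ and all $E^*_{[s,t]}$. With $e_0,e_1,e_2$ the standard basis of $\mathbb C^3$, identify $V$ with $(\mathbb C^3)^{\otimes d}$ via $\hat y\mapsto e_{y_1}\otimes\cdots\otimes e_{y_d}$, and hence $\mathrm{Mat}_X(\mathbb C)$ with $\mathrm{Mat}_3(\mathbb C)^{\otimes d}$. *)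

From HB Require Import structures.
From mathcomp Require Import all_boot all_order all_algebra.
From mathcomp Require Import complex.
From mathcomp Require Import Rstruct.
Import GRing.Theory Num.Theory.
Local Open Scope ring_scope.


(* X = F_3^d, vertices are functions 'I_d -> 'I_3 (coordinates 1..d are 0..d-1). *)
Definition X (d : nat) : finType := {ffun 'I_d -> 'I_3}.

Definition matX (d : nat) : Type := X d -> X d -> Rdefinitions.R[i].

Definition mx_add d (A B : matX d) : matX d := fun y z => A y z + B y z.
Definition mx_scale d (c : Rdefinitions.R[i]) (A : matX d) : matX d :=
  fun y z => c * A y z.
Definition mx_mul d (A B : matX d) : matX d :=
  fun y z => \sum_(w : X d) A y w * B w z.
Definition mx_id d : matX d := fun y z => (y == z)%:R.
Definition mx_tr d (A : matX d) : matX d := fun y z => A z y.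

Arguments mx_add {d}. Arguments mx_scale {d}. Arguments mx_mul {d}.
Arguments mx_tr {d}.

Definition arc d (y z : X d) : bool :=
  [exists i : 'I_d,
     [&& (nat_of_ord (z i) == (((y i).+1) %% 3)%N)
       & [forall j : 'I_d, (j != i) ==> (y j == z j)]]].

Arguments arc {d}.
Definition adjA d : matX d := fun y z => (arc y z)%:R.

(* E*_{[s,t]} : diagonal, (y,y)-entry 1 iff y has exactly s ones and t twos.
   (For negative s or t this is the zero matrix, which is in any subalgebra,
   so taking s t : nat loses nothing.) *)
Definition nones d (y : X d) : nat := #|[set i : 'I_d | nat_of_ord (y i) == 1%N]|.
Definition ntwos d (y : X d) : nat := #|[set i : 'I_d | nat_of_ord (y i) == 2%N]|.
Arguments nones {d}. Arguments ntwos {d}.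
Definition Estar d (s t : nat) : matX d :=
  fun y z => ((y == z) && (nones y == s) && (ntwos y == t))%:R.

Inductive inT (d : nat) : matX d -> Prop :=
  | inT_A : inT d (adjA d)
  | inT_At : inT d (mx_tr (adjA d))
  | inT_E : forall s t, inT d (Estar d s t)
  | inT_1 : inT d (mx_id d)
  | inT_add : forall A B, inT d A -> inT d B -> inT d (mx_add A B)
  | inT_scale : forall c A, inT d A -> inT d (mx_scale c A)
  | inT_mul : forall A B, inT d A -> inT d B -> inT d (mx_mul A B).

(* L(M) = sum_i I^{(i-1)} (x) M (x) I^{(d-i)}, written entrywise under
   hat y |-> e_{y_1} (x) ... (x) e_{y_d}:
   (y,z)-entry = sum_i M_{y_i z_i} * prod_{j <> i} [y_j = z_j]. *)
Definition Lmx d (M : 'M[Rdefinitions.R[i]]_3) : matX d :=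
  fun y z => \sum_(i : 'I_d)
     M (y i) (z i) * ([forall j : 'I_d, (j != i) ==> (y j == z j)])%:R.

From mathcomp Require Import all_boot all_algebra complex Rstruct ring.
From Stdlib Require Import FunctionalExtensionality.
Import GRing.Theory Num.Theory.
Local Open Scope ring_scope.

(* The matrices M with L(M) in T form a subspace closed under transposition
   (the generators of T are symmetric or swapped by transposition), so it
   suffices to reach every matrix unit E_ac.  L sends the cyclic shift
   P : e_b |-> e_(b+1) to A, and the diagonal unit E_aa to the diagonal matrix
   counting the coordinates equal to a, a combination of the E*_[s,t] (and of
   the identity, for a = 0).  For diagonal D, [L(D), L(N)] = L([D, N]); for an
   idempotent E, E N (1 - E) = (ad_E N + ad_E^2 N) / 2, which with E = E_aa and
   N = P isolates E_(a,a+1).  Every E_ac with a <> c is E_(a,a+1) or the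
   transpose of E_(c,c+1). *)

Local Notation C := Rdefinitions.R[i].
Local Notation agree_off i y z := [forall j, (j != i) ==> (y j == z j)].

Arguments inT_add {d A B}.
Arguments inT_mul {d A B}.
Arguments inT_scale {d} c {A}.

Lemma ad_add_ad2_idem {R : pzRingType} (e x : R) : e * e = e ->
  (e * x - x * e) + (e * (e * x - x * e) - (e * x - x * e) * e)
  = e * x * (1 - e) *+ 2.
Proof.
move=> ee; rewrite mulrBr mulrBl !mulrA ee -[x * e * e]mulrA ee mulrBr mulr1.
by rewrite mulr2n opprB addrCA [_ - x * e + _]addrA subrK.
Qed.

Lemma sum_ord_dirac {R : nmodType} (F : nat -> R) n m : (m < n)%N ->
  \sum_(s < n) F s *+ (m == s) = F m.
Proof.
move=> ltmn; under eq_bigr do rewrite mulrb eq_sym.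
by rewrite -big_mkcond big_ord1_eq ltmn.
Qed.

Lemma sum_sub_agree_off {R : zmodType} {T : finType} {n} (f : T -> R) {i}
    {y z : {ffun 'I_n -> T}} :
  agree_off i y z -> \sum_j f (y j) - \sum_j f (z j) = f (y i) - f (z i).
Proof.
move=> /forallP yz; rewrite (bigD1 i) // [X in _ - X](bigD1 i) //=.
rewrite [X in _ - (_ + X)](eq_bigr (fun j => f (y j))) => [|j ji].
  by rewrite opprD addrACA subrr addr0.
by move/implyP: (yz j) => /(_ ji)/eqP->.
Qed.

Lemma diag_delta_mx (R : pzSemiRingType) n (a : 'I_n) :
  diag_mx (delta_mx 0 a) = delta_mx a a :> 'M[R]_n.
Proof.
apply/matrixP => b c; rewrite !mxE eqxx /=.
case: (eqVneq b c) => [<-|bc]; first by rewrite andbb.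
by case: eqP => // ba; rewrite -ba eq_sym (negPf bc).
Qed.

Definition shift_mx {R : pzSemiRingType} {n} : 'M[R]_n := \matrix_(b, c) (c == ordS b)%:R.

Lemma delta_mul_shift_mx (R : pzSemiRingType) n (a : 'I_n) :
  delta_mx a a *m shift_mx = delta_mx a (ordS a) :> 'M[R]_n.
Proof.
have row_shift : delta_mx 0 a *m shift_mx = delta_mx 0 (ordS a) :> 'rV[R]_n.
  by rewrite -rowE; apply/rowP => c; rewrite !mxE eqxx.
by rewrite -(mul_delta_mx (0 : 'I_1) a a) -mulmxA row_shift mul_delta_mx.
Qed.

Lemma sum_indicator_unique (R : pzSemiRingType) (I : finType) (P : pred I) :
  (forall i j, P i -> P j -> i = j) -> \sum_i (P i)%:R = [exists i, P i]%:R :> R.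
Proof.
move=> uniqP; case: (boolP [exists i, P i]) => [/existsP[i Pi]|/existsPn noP].
  rewrite (bigD1 i) //= Pi big1 ?addr0 // => j ji; case: (boolP (P j)) => // Pj.
  by rewrite (uniqP _ _ Pi Pj) eqxx in ji.
by rewrite big1 // => i _; rewrite (negPf (noP i)).
Qed.

Section Terwilliger.

Variable d : nat.
Implicit Types (A B : matX d) (y z : X d) (M N : 'M[C]_3).

Lemma eq_inT {A B} : inT d A -> A =2 B -> inT d B.
Proof.
move=> TA eqAB; suff -> : B = A by [].
by do 2!apply: functional_extensionality => ?; rewrite eqAB.
Qed.

Lemma inT0 : inT d (fun _ _ => 0).
Proof. by apply: (eq_inT (inT_scale 0 (inT_1 d))) => y z; rewrite /mx_scale mul0r. Qed.

Lemma inT_sum (I : Type) (r : seq I) (F : I -> matX d) :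
  (forall i, inT d (F i)) -> inT d (fun y z => \sum_(i <- r) F i y z).
Proof.
move=> TF; elim: r => [|i r IHr].
  by apply: (eq_inT inT0) => y z; rewrite big_nil.
by apply: (eq_inT (inT_add (TF i) IHr)) => y z; rewrite big_cons.
Qed.

Lemma inT_tr A : inT d A -> inT d (mx_tr A).
Proof.
elim=> {A} [| |s t| |A B _ TA _ TB|c A _ TA|A B _ TA _ TB].
- exact: inT_At.
- exact: inT_A.
- apply: (eq_inT (inT_E d s t)) => y z; rewrite /mx_tr /Estar.
  by case: eqVneq => [->|]; rewrite ?andbF // eq_sym => /negPf->.
- by apply: (eq_inT (inT_1 d)) => y z; rewrite /mx_tr /mx_id eq_sym.
- exact: inT_add TA TB.
- exact: (inT_scale c TA).
- apply: (eq_inT (inT_mul TB TA)) => y z; rewrite /mx_tr /mx_mul.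
  by apply: eq_bigr => w _; rewrite mulrC.
Qed.

Lemma inT_diag_count (G : nat -> nat -> C) :
  inT d (fun y z => (y == z)%:R * G (nones y) (ntwos y)).
Proof.
have TE s t : inT d (mx_scale (G s t) (Estar d s t)) by apply/inT_scale/inT_E.
apply: (eq_inT (inT_sum _ (index_enum 'I_d.+1) _
  (fun s : 'I_d.+1 => inT_sum _ (index_enum 'I_d.+1) _ (TE s)))).
have count_lt P : (#|[set i : 'I_d | P i]| < d.+1)%N.
  by rewrite ltnS -[X in (_ <= X)%N]card_ord max_card.
move=> y z; rewrite /mx_scale /Estar.
under eq_bigr do under eq_bigr do rewrite mulr_natr -!mulnb !mulrnA.
rewrite (eq_bigr (fun s : 'I_d.+1 => G s (ntwos y) *+ (y == z) *+ (nones y == s))).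
  rewrite (sum_ord_dirac (fun s => G s (ntwos y) *+ (y == z))); last exact: count_lt.
  by case: (y == z); rewrite ?mul1r ?mul0r.
move=> s _; rewrite (sum_ord_dirac (fun t => G s t *+ (y == z) *+ (nones y == s))).
  by rewrite mulrnAC.
exact: count_lt.
Qed.

Lemma eq_ffun_agree_off y z i : ((y i == z i) && agree_off i y z) = (y == z).
Proof.
apply/andP/eqP => [[/eqP yzi /forallP yz]|->].
  by apply/ffunP => j; case: (eqVneq j i) => [->//|ji]; apply/eqP/(implyP (yz j)).
by split; last by apply/forallP => j; apply/implyP.
Qed.

Lemma LmxD M N : Lmx d (M + N) =2 mx_add (Lmx d M) (Lmx d N).
Proof.
by move=> y z; rewrite /Lmx /mx_add -big_split; apply: eq_bigr => i _; rewrite mxE mulrDl.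
Qed.

Lemma LmxZ c M : Lmx d (c *: M) =2 mx_scale c (Lmx d M).
Proof.
by move=> y z; rewrite /Lmx /mx_scale mulr_sumr; apply: eq_bigr => i _; rewrite mxE mulrA.
Qed.

Lemma Lmx0 : Lmx d 0 =2 fun _ _ => 0.
Proof. by move=> y z; rewrite /Lmx big1 // => i _; rewrite mxE mul0r. Qed.

Lemma Lmx_tr M : Lmx d M^T =2 mx_tr (Lmx d M).
Proof.
move=> y z; rewrite /Lmx /mx_tr; apply: eq_bigr => i _; rewrite mxE.
suff -> : agree_off i z y = agree_off i y z by [].
by apply: eq_forallb => j; rewrite [z j == _]eq_sym.
Qed.

Lemma Lmx_diag (δ : 'rV[C]_3) :
  Lmx d (diag_mx δ) =2 fun y z => (y == z)%:R * \sum_i δ 0 (y i).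
Proof.
move=> y z; rewrite /Lmx mulr_sumr; apply: eq_bigr => i _.
rewrite mxE -[_ *+ (y i == z i)]mulr_natr -mulrA -natrM mulnb.
by rewrite eq_ffun_agree_off mulrC.
Qed.

Lemma mx_mul_diagl {D : matX d} {f : X d -> C} :
  (forall y z, D y z = (y == z)%:R * f y) -> forall A y z, mx_mul D A y z = f y * A y z.
Proof.
move=> Df A y z; rewrite /mx_mul (bigD1 y) //= big1 => [|w wy].
  by rewrite Df eqxx mul1r addr0.
by rewrite Df eq_sym (negPf wy) !mul0r.
Qed.

Lemma mx_mul_diagr {D : matX d} {f : X d -> C} :
  (forall y z, D y z = (y == z)%:R * f y) -> forall A y z, mx_mul A D y z = A y z * f z.
Proof.
move=> Df A y z; rewrite /mx_mul (bigD1 z) //= big1 => [|w wz].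
  by rewrite Df eqxx mul1r addr0.
by rewrite Df (negPf wz) mul0r mulr0.
Qed.

Lemma Lmx_comm_diag (δ : 'rV[C]_3) N :
  Lmx d (diag_mx δ *m N - N *m diag_mx δ)
  =2 fun y z => (\sum_i δ 0 (y i) - \sum_i δ 0 (z i)) * Lmx d N y z.
Proof.
move=> y z; rewrite /Lmx mulr_sumr; apply: eq_bigr => i _.
rewrite mul_diag_mx mul_mx_diag !mxE.
case: (boolP (agree_off i y z)) => [yz|]; last by rewrite !mulr0.
by rewrite (sum_sub_agree_off _ yz); ring.
Qed.

Lemma inT_Lmx_comm_diag {δ : 'rV[C]_3} {N} :
  inT d (Lmx d (diag_mx δ)) -> inT d (Lmx d N) ->
  inT d (Lmx d (diag_mx δ *m N - N *m diag_mx δ)).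
Proof.
move=> TD TN.
apply: (eq_inT (inT_add (inT_mul TD TN) (inT_scale (-1) (inT_mul TN TD)))) => y z.
rewrite Lmx_comm_diag /mx_add /mx_scale (mx_mul_diagl (Lmx_diag δ)).
by rewrite (mx_mul_diagr (Lmx_diag δ)); ring.
Qed.

Lemma inT_LmxD {M N} : inT d (Lmx d M) -> inT d (Lmx d N) -> inT d (Lmx d (M + N)).
Proof. by move=> TM TN; apply: (eq_inT (inT_add TM TN)) => y z; rewrite LmxD. Qed.

Lemma inT_LmxZ c {M} : inT d (Lmx d M) -> inT d (Lmx d (c *: M)).
Proof. by move=> TM; apply: (eq_inT (inT_scale c TM)) => y z; rewrite LmxZ. Qed.

Lemma inT_LmxB {M N} : inT d (Lmx d M) -> inT d (Lmx d N) -> inT d (Lmx d (M - N)).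
Proof. by move=> TM TN; rewrite -scaleN1r; apply/inT_LmxD/inT_LmxZ. Qed.

Lemma inT_Lmx_tr {M} : inT d (Lmx d M) -> inT d (Lmx d M^T).
Proof. by move=> /inT_tr TM; apply: (eq_inT TM) => y z; rewrite Lmx_tr. Qed.

Lemma inT_Lmx_sum (I : finType) (F : I -> 'M[C]_3) :
  (forall i, inT d (Lmx d (F i))) -> inT d (Lmx d (\sum_i F i)).
Proof.
move=> TF; apply: (big_ind (fun N => inT d (Lmx d N))) => [|M N|i _].
- by apply: (eq_inT inT0) => y z; rewrite Lmx0.
- exact: inT_LmxD.
- exact: TF.
Qed.

Lemma inT_Lmx_corner {δ : 'rV[C]_3} {N} :
  diag_mx δ *m diag_mx δ = diag_mx δ ->
  inT d (Lmx d (diag_mx δ)) -> inT d (Lmx d N) ->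
  inT d (Lmx d (diag_mx δ *m N *m (1%:M - diag_mx δ))).
Proof.
move=> idemE TE TN; have TadN := inT_Lmx_comm_diag TE TN.
have := inT_LmxZ 2^-1 (inT_LmxD TadN (inT_Lmx_comm_diag TE TadN)).
have := ad_add_ad2_idem (diag_mx δ) N idemE; rewrite -!mulmxE => ->.
by rewrite -(scaler_nat 2 (_ *m _ *m _)) scalerA mulVf ?scale1r // pnatr_eq0.
Qed.

Lemma Lmx_delta_diag a :
  Lmx d (delta_mx a a) =2 fun y z => (y == z)%:R * #|[set i | y i == a]|%:R.
Proof.
move=> y z; rewrite -diag_delta_mx Lmx_diag -sum1_card natr_sum; congr (_ * _).
by rewrite [RHS]big_mkcond; apply: eq_bigr => i _; rewrite !mxE inE; case: (y i == a).
Qed.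

Lemma inT_Lmx1 : inT d (Lmx d 1%:M).
Proof.
apply: (eq_inT (inT_scale d%:R (inT_1 d))) => y z.
rewrite -diag_const_mx Lmx_diag /mx_scale /mx_id mulrC.
by under eq_bigr do rewrite mxE; rewrite sumr_const card_ord.
Qed.

Lemma inT_Lmx_delta_diag a : inT d (Lmx d (delta_mx a a)).
Proof.
have count_val (b : 'I_3) y :
    #|[set i | y i == b]| = #|[set i | nat_of_ord (y i) == b]|.
  by apply: eq_card => i; rewrite !inE -val_eqE.
have T12 (b : 'I_3) : (0 < b)%N -> inT d (Lmx d (delta_mx b b)).
  case: b => [[|[|[|//]]] ltb3] // _.
  - apply: (eq_inT (inT_diag_count (fun s _ => s%:R))) => y z.
    by rewrite Lmx_delta_diag count_val.
  - apply: (eq_inT (inT_diag_count (fun _ t => t%:R))) => y z.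
    by rewrite Lmx_delta_diag count_val.
case: (posnP a) => [a0|]; last exact: T12.
have -> : delta_mx a a
    = 1%:M - delta_mx (inord 1) (inord 1) - delta_mx (inord 2) (inord 2) :> 'M[C]_3.
  apply/matrixP => b c; rewrite !mxE -!val_eqE /= a0 !inordK //.
  by case: b c => [[|[|[|//]]] ?] [[|[|[|//]]] ?]; rewrite /= ?subr0 ?subrr.
by apply: inT_LmxB (T12 _ _); [apply: inT_LmxB inT_Lmx1 (T12 _ _)|]; rewrite inordK.
Qed.

Lemma Lmx_shift_mx : Lmx d shift_mx =2 adjA d.
Proof.
move=> y z; rewrite /Lmx /adjA /arc.
under eq_bigr do rewrite mxE -natrM mulnb.
apply: sum_indicator_unique => i j /andP[/eqP zi _] /andP[_ /forallP yz].
apply: contraTeq (yz i) => ij; rewrite ij /= zi.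
by case: (y i) => [[|[|[|//]]] ?].
Qed.

Lemma inT_Lmx_delta_succ a : inT d (Lmx d (delta_mx a (ordS a))).
Proof.
have Sa_neq_a : ordS a != a by case: a => [[|[|[|//]]] ?].
have idem : diag_mx (delta_mx 0 a) *m diag_mx (delta_mx 0 a)
    = diag_mx (delta_mx 0 a) :> 'M[C]_3.
  by rewrite diag_delta_mx mul_delta_mx.
have TA : inT d (Lmx d shift_mx).
  by apply: (eq_inT (inT_A d)) => y z; rewrite Lmx_shift_mx.
have TE := inT_Lmx_delta_diag a; rewrite -diag_delta_mx in TE.
have := inT_Lmx_corner idem TE TA.
by rewrite diag_delta_mx delta_mul_shift_mx mulmxBr mulmx1 mul_delta_mx_0 ?subr0.
Qed.

Lemma inT_Lmx_delta a c : inT d (Lmx d (delta_mx a c)).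
Proof.
case: (eqVneq a c) => [<-|ac]; first exact: inT_Lmx_delta_diag.
have : (c == ordS a) || (a == ordS c) by move: a c ac; do 2!case=> [[|[|[|//]]] ?].
case/orP=> /eqP->; first exact: inT_Lmx_delta_succ.
by rewrite -trmx_delta; apply/inT_Lmx_tr/inT_Lmx_delta_succ.
Qed.

End Terwilliger.

Theorem lemma5p4 (d : nat) (hd : (1 <= d)%N) (M : 'M[Rdefinitions.R[i]]_3) :
  inT d (Lmx d M).
Proof.
rewrite (matrix_sum_delta M); do 2!apply: inT_Lmx_sum => ?.
exact/inT_LmxZ/inT_Lmx_delta.
Qed.
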